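(* Let $m\ge1$, $n\ge1$, fix $t_0\in\mathbb{Z}^m$ and let $\mathcal{Z}=\{t\in\mathbb{Z}^m\mid t\ge t_0\}$. Let $T=(T^1,\dots,T^m)\in\mathbb{N}^m$, $T\ne0$. Let $A_\alpha\colon\mathcal{Z}\to\mathcal{M}_n(\mathbb{C})$, $\alpha\in\{1,\dots,m\}$, satisfy $$A_\alpha(t+1_\beta)A_\beta(t)=A_\beta(t+1_\alpha)A_\alpha(t),\quad \forall t\in\mathcal{Z},\ \forall\alpha,\beta,$$ and suppose that each $A_\alpha$ is periodic of period $T$ (i.e. $A_\alpha(t+T)=A_\alpha(t)$ for all $t\in\mathcal{Z}$) and $A_\alpha(t)$ is invertible for all $t\in\mathcal{Z}$. Let $\Phi(t)=\chi(t,t_0)$, $t\in\mathcal{Z}$. Then there exist a function $P\colon\mathcal{Z}\to\mathcal{M}_n(\mathbb{C})$, periodic of period $T$, and a constant invertible matrix $B\in\mathcal{M}_n(\mathbb{C})$ such that $\Phi(t)=P(t)B^{|t|}$ for all $t\ge t_0$, where $|t|=t^1+\dots+t^m$.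
   Context: $\mathbb{N}=\{0,1,2,\dots\}$; $1_\alpha\in\mathbb{Z}^m$ has $1$ in position $\alpha$ and $0$ elsewhere; $s\le t$ in $\mathbb{Z}^m$ means $s^\alpha\le t^\alpha$ for all $\alpha$. Under the compatibility relations, for each $s\in\mathcal{Z}$ there is a unique $\chi(\cdot,s)\colon\{t\in\mathcal{Z}\mid t\ge s\}\to\mathcal{M}_n(\mathbb{C})$ with $\chi(s,s)=I_n$ and $\chi(t+1_\alpha,s)=A_\alpha(t)\chi(t,s)$ for all $t\ge s$ and all $\alpha$ (the transition matrix). Negative integer powers of $B$ are powers of $B^{-1}$. *)

From HB Require Import structures.
From mathcomp Require Import all_boot all_order all_algebra.
From mathcomp Require Import reals.
From mathcomp Require Import complex.
Set Implicit Arguments. Unset Strict Implicit. Unset Printing Implicit Defensive.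
Import Order.TTheory GRing.Theory Num.Theory.
Local Open Scope ring_scope.

Definition unitv (m : nat) (a : 'I_m) : 'rV[int]_m := delta_mx 0 a.

Definition lev (m : nat) (s t : 'rV[int]_m) : Prop := forall i, s 0 i <= t 0 i.

Definition absv (m : nat) (t : 'rV[int]_m) : int := \sum_i t 0 i.

From HB Require Import structures.
From mathcomp Require Import all_boot all_order all_algebra.
From mathcomp Require Import reals.
From mathcomp Require Import complex.
From mathcomp Require Import ring zify.
Set Implicit Arguments. Unset Strict Implicit. Unset Printing Implicit Defensive.
Import Order.TTheory GRing.Theory Num.Theory.
Local Open Scope ring_scope.

(* Periodicity of the coefficients gives Phi(t + T) = Phi(t) M with the
   invertible monodromy matrix M = Phi(t0 + T).  As |T| = K + 1 > 0, any B with
   B^(K+1) = M makes P(t) = Phi(t) B^(-|t|) T-periodic.  Such a root is a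
   polynomial in M: all roots of the characteristic polynomial are nonzero, so
   X has a (K+1)-th root modulo it, built one linear factor X - z at a time (a
   Newton step when z is a repeated root, a Chinese-remainder step otherwise),
   and Cayley-Hamilton transfers it to M. *)

Lemma exprSDr_mod_sqr (R : comNzRingType) (a b : R) k :
  exists s, (a + b) ^+ k.+1 = a ^+ k.+1 + b * (k.+1%:R * a ^+ k) + b ^+ 2 * s.
Proof.
elim: k => [|k [s IH]]; first by exists 0; rewrite !expr1 expr0; ring.
exists (a * s + k.+1%:R * a ^+ k + b * s).
by rewrite exprS IH !exprS -addn1 natrD; ring.
Qed.

Lemma pow_subX_perturb (R : comNzRingType) (f q r : {poly R}) (c : R) k :
  q ^+ k.+1 - 'X = r * f -> exists g,
  (q + c%:P * f) ^+ k.+1 - 'X = (r + c%:P * (k.+1%:R * q ^+ k) + c%:P ^+ 2 * f * g) * f.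
Proof.
move/eqP; rewrite subr_eq => /eqP Hr.
have [s ->] := exprSDr_mod_sqr q (c%:P * f) k.
by exists s; rewrite Hr; ring.
Qed.

Lemma dvdp_pow_subX_mulXsubC (F : numClosedFieldType) k (f q : {poly F}) z :
  z != 0 -> f %| q ^+ k.+1 - 'X ->
  exists q', ('X - z%:P) * f %| q' ^+ k.+1 - 'X.
Proof.
move=> z0 /dvdpP [r Hr].
have qz : q.[z] ^+ k.+1 = z + r.[z] * f.[z].
  by have := congr1 (horner^~ z) Hr; rewrite /= !hornerE => <-; ring.
have [fz0|fz0] := eqVneq f.[z] 0.
  (* z is a repeated root: one Newton step kills the value at z. *)
  have qz0 : q.[z] != 0.
    apply: contra z0 => /eqP q0.
    by move: qz; rewrite q0 fz0 mulr0 addr0 expr0n /= => <-.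
  have dq0 : k.+1%:R * q.[z] ^+ k != 0 by rewrite mulf_neq0 ?pnatr_eq0 ?expf_neq0.
  pose c := - r.[z] / (k.+1%:R * q.[z] ^+ k).
  have [g Hg] := pow_subX_perturb c Hr.
  exists (q + c%:P * f); rewrite Hg dvdp_mul ?dvdpp // dvdp_XsubCl /root.
  rewrite -polyC_natr !(hornerD, hornerM, horner_exp, hornerC) fz0.
  by rewrite mulr0 mul0r addr0 /c divfK // addrN.
(* z is a new root: move q.[z] to a (k+1)-th root of z, coprime to f. *)
pose d := (k.+1.-root z - q.[z]) / f.[z].
have [g Hg] := pow_subX_perturb d Hr.
exists (q + d%:P * f).
rewrite Gauss_dvdp; last by rewrite coprimep_sym coprimep_XsubC /root fz0.
rewrite dvdp_XsubCl Hg dvdp_mull ?dvdpp // andbT -Hg /root.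
rewrite !(hornerD, hornerM, horner_exp, hornerC, hornerN, hornerX) /d.
by rewrite divfK // subrKC rootCK // subrr.
Qed.

Lemma prod_XsubC_dvd_pow_subX (F : numClosedFieldType) k (rs : seq F) :
  0 \notin rs -> exists q : {poly F}, \prod_(z <- rs) ('X - z%:P) %| q ^+ k.+1 - 'X.
Proof.
elim: rs => [|z rs IH]; first by exists 0; rewrite big_nil dvd1p.
rewrite inE negb_or eq_sym => /andP [z0 /IH [q Hq]].
by rewrite big_cons; exact: dvdp_pow_subX_mulXsubC z0 Hq.
Qed.

Lemma root_char_poly_unitmx (F : fieldType) n (M : 'M[F]_n) :
  M \in unitmx -> ~~ root (char_poly M) 0.
Proof.
rewrite unitmxE unitfE; apply: contra => /eqP.
by rewrite horner_coef0 char_poly_det => /eqP; rewrite mulf_eq0 signr_eq0.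
Qed.

Lemma unitmx_root (F : numClosedFieldType) n (M : 'M[F]_n.+1) k :
  M \in unitmx -> exists B, B ^+ k.+1 = M.
Proof.
move=> uM; have [rs Hrs] := closed_field_poly_normal (char_poly M).
rewrite (monicP (char_poly_monic M)) scale1r in Hrs.
have rs0 : 0 \notin rs by rewrite -root_prod_XsubC -Hrs root_char_poly_unitmx.
have [q /dvdpP [d Hd]] := prod_XsubC_dvd_pow_subX k rs0.
exists (horner_mx M q); apply/eqP; rewrite -subr_eq0.
have := congr1 (horner_mx M) Hd.
by rewrite -Hrs rmorphM /= Cayley_Hamilton mulr0 rmorphB rmorphXn /= horner_mx_X => ->.
Qed.

Lemma absvD m (x y : 'rV[int]_m) : absv (x + y) = absv x + absv y.
Proof. by rewrite /absv -big_split; apply: eq_bigr => i _; rewrite mxE. Qed.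

Lemma absvN m (x : 'rV[int]_m) : absv (- x) = - absv x.
Proof. by rewrite /absv -sumrN; apply: eq_bigr => i _; rewrite mxE. Qed.

Lemma absv_unitv m (j : 'I_m) : absv (unitv j) = 1.
Proof.
rewrite /absv (bigD1 j) //= /unitv mxE !eqxx big1 ?addr0 // => i /negbTE hi.
by rewrite mxE hi andbF.
Qed.

Lemma absv_gt0 m (t : 'rV[int]_m) :
  (forall i, 0 <= t 0 i) -> t != 0 -> 0 < absv t.
Proof.
move=> t_ge0; apply: contraNT; rewrite -leNgt => absv_le0.
have absv0 : absv t = 0 by apply/le_anti; rewrite absv_le0 sumr_ge0.
apply/eqP/matrixP => i j; rewrite ord1 mxE.
exact: (psumr_eq0P (P := predT) (fun i _ => t_ge0 i) absv0).
Qed.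

Lemma lev_addr m (t0 t d : 'rV[int]_m) :
  (forall i, 0 <= d 0 i) -> lev t0 t -> lev t0 (t + d).
Proof. by move=> d_ge0 ht i; rewrite mxE (le_trans (ht i)) ?lerDl. Qed.

Lemma lev_ind m (t0 : 'rV[int]_m) (P : 'rV[int]_m -> Prop) :
  P t0 -> (forall s, lev t0 s -> P s -> forall a, P (s + unitv a)) ->
  forall t, lev t0 t -> P t.
Proof.
move=> P0 PS.
have sub_ge0 t : lev t0 t -> forall i, 0 <= (t - t0) 0 i.
  by move=> ht i; rewrite !mxE subr_ge0.
suff PN : forall N : nat, forall t, lev t0 t -> absv (t - t0) = N%:Z -> P t.
  move=> t ht; apply: (PN `|absv (t - t0)|%N) => //.
  by rewrite gez0_abs // sumr_ge0 // => i _; apply: sub_ge0.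
elim=> [|N IH] t ht hN.
  suff /eqP -> : t == t0 by [].
  rewrite -subr_eq0; apply: contraNT (absv_gt0 (sub_ge0 t ht)) _.
  by rewrite hN ltxx.
have [j hj] : exists j, t0 0 j < t 0 j.
  apply/existsP; apply: contraT; rewrite negb_exists => /forallP tt0.
  suff : absv (t - t0) = 0 by rewrite hN.
  rewrite /absv big1 // => i _; rewrite !mxE; apply/eqP; rewrite subr_eq0.
  by rewrite eq_le (ht i) andbT leNgt tt0.
have hs : lev t0 (t - unitv j).
  by move=> i; rewrite !mxE eqxx; case: (eqVneq i j) => [->|_] /=; [lia | rewrite subr0].
rewrite -(subrK (unitv j) t); apply: PS => //; apply: IH => //.
rewrite addrAC absvD absvN absv_unitv hN; lia.
Qed.

Section Monodromy.

Variables (R : comUnitRingType) (m n : nat) (t0 T : 'rV[int]_m).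
Variables (A : 'I_m -> 'rV[int]_m -> 'M[R]_n.+1) (Phi : 'rV[int]_m -> 'M[R]_n.+1).
Hypothesis T_ge0 : forall i, 0 <= T 0 i.
Hypothesis A_periodic : forall a t, lev t0 t -> A a (t + T) = A a t.
Hypothesis A_unit : forall a t, lev t0 t -> A a t \in unitmx.
Hypothesis Phi_t0 : Phi t0 = 1.
Hypothesis PhiS : forall t, lev t0 t -> forall a, Phi (t + unitv a) = A a t * Phi t.

Lemma Phi_unitmx t : lev t0 t -> Phi t \in unitmx.
Proof.
move: t; apply: lev_ind => [|s hs us a]; first by rewrite Phi_t0 unitmx1.
by rewrite PhiS // -mulmxE unitmx_mul A_unit.
Qed.

Lemma Phi_addT t : lev t0 t -> Phi (t + T) = Phi t * Phi (t0 + T).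
Proof.
move: t; apply: lev_ind => [|s hs IH a]; first by rewrite Phi_t0 mul1r.
have hsT := lev_addr T_ge0 hs.
by rewrite addrAC (PhiS hsT) A_periodic // IH PhiS // mulrA.
Qed.

End Monodromy.

Theorem theorem2p17 (R : realType) (m n : nat) (hm : (0 < m)%N)
  (t0 : 'rV[int]_m) (T : 'rV[int]_m)
  (hTnat : forall i, 0 <= T 0 i) (hT0 : T != 0)
  (A : 'I_m -> 'rV[int]_m -> 'M[R[i]]_n.+1)
  (hcompat : forall t, lev t0 t -> forall a b : 'I_m,
      A a (t + unitv b) * A b t = A b (t + unitv a) * A a t)
  (hper : forall a t, lev t0 t -> A a (t + T) = A a t)
  (hinv : forall a t, lev t0 t -> A a t \in unitmx)
  (Phi : 'rV[int]_m -> 'M[R[i]]_n.+1)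
  (hPhi0 : Phi t0 = 1)
  (hPhiS : forall t, lev t0 t -> forall a, Phi (t + unitv a) = A a t * Phi t) :
  exists (P : 'rV[int]_m -> 'M[R[i]]_n.+1) (B : 'M[R[i]]_n.+1),
    (forall t, lev t0 t -> P (t + T) = P t) /\
    B \in unitmx /\
    (forall t, lev t0 t -> Phi t = P t * B ^ (absv t)).
Proof.
(* hcompat only guarantees that Phi exists; hPhiS is all that is used. *)
have T_gt0 := absv_gt0 hTnat hT0.
pose K := (`|absv T|.-1)%N.
have absvT : absv T = K.+1%:Z by rewrite prednK ?absz_gt0 ?gtz0_abs ?lt0r_neq0.
have lev_t0T : lev t0 (t0 + T) by apply: lev_addr => // i.
have uM := Phi_unitmx hinv hPhi0 hPhiS lev_t0T.
have [B BM] := unitmx_root K uM.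
have uB : B \is a GRing.unit by rewrite -(unitrX_pos _ (ltn0Sn K)) BM.
exists (fun t => Phi t * B ^ (- absv t)), B; split => [t ht|]; last split => // t _.
  rewrite (Phi_addT hTnat hper hPhi0 hPhiS ht) absvD absvT -BM.
  rewrite -[B ^+ K.+1]/(B ^ K.+1%:Z) -mulrA -exprzDr //.
  by congr (_ * B ^ _); lia.
by rewrite -mulrA -exprzDr // addNr mulr1.
Qed.
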